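(* Let $d\in\mathbb{N}$, and for $a=(a_0,\dots,a_d)\in\mathbb{R}^{d+1}$ and $s\in\mathbb{R}$ let $g(a,s)=a_0+a_1s+\cdots+a_ds^d$. For $m,R>0$ set $K=\{a\in\mathbb{R}^{d+1}: |a_0|+\cdots+|a_d|\geq m\}$ and $I=[-R,R]$. Then there exists $\lambda=\lambda(d,m,R)>0$ such that for each $a\in K$, either there exists $p\in\{1,\dots,d\}$ with $\left|\frac{\partial^p g}{\partial s^p}(a,s)\right|\geq\lambda$ for all $s\in I$, or $|a_0|-\sup_{s\in I}|g(a,s)-a_0|\geq\lambda$. *)

From HB Require Import structures.
From mathcomp Require Import all_boot all_order all_algebra.
From mathcomp Require Import all_classical all_reals.
Set Implicit Arguments. Unset Strict Implicit. Unset Printing Implicit Defensive.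
Import Order.TTheory GRing.Theory Num.Theory.
Local Open Scope ring_scope.

Definition gpoly (R : realType) (d : nat) (a : 'I_d.+1 -> R) : {poly R} :=
  \poly_(i < d.+1) a (inord i).

Definition g (R : realType) (d : nat) (a : 'I_d.+1 -> R) (s : R) : R :=
  (gpoly a).[s].

Definition dg (R : realType) (d : nat) (p : nat) (a : 'I_d.+1 -> R) (s : R) : R :=
  ((gpoly a)^`(p)).[s].

(** Core fact: if a polynomial [q] with [size q <= n] has, for every [k < n],
    a point of [I] where [|q^(k)| <= eps], then all its coefficients are
    [O(eps)].  By induction on [n], applied to [q'], the coefficients
    [q_1, q_2, ...] are [O(eps)]; the constant term then differs by [O(eps)]
    from the value [|q(s)| <= eps] at the point chosen for [k = 0].
    Applied to [g'] with [eps = lam], the failure of the first alternative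
    makes [a_1, ..., a_d] all [O(lam)], so [|a_0| >= m - O(lam)] while
    [sup_I |g - a_0| = O(lam)]; a small enough multiple of [m] serves as [lam]. *)

From HB Require Import structures.
From mathcomp Require Import all_boot all_order all_algebra.
From mathcomp Require Import all_classical all_reals.
Import Order.TTheory GRing.Theory Num.Theory.
From mathcomp Require Import ring lra.
Local Open Scope ring_scope.
Local Open Scope classical_set_scope.

Lemma size_deriv_le {R : nzSemiRingType} n (q : {poly R}) :
  (size q <= n.+1)%N -> (size q^`() <= n)%N.
Proof. by move=> sq; rewrite (leq_trans (size_poly _ _)) // -subn1 leq_subLR add1n. Qed.

Lemma norm_coefS_le_deriv {R : numDomainType} (q : {poly R}) i :
  `|q`_i.+1| <= `|q^`()`_i|.
Proof. by rewrite coef_deriv -mulr_natr normrM normr_nat ler_peMr // ler1n. Qed.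

Lemma norm_horner_subr_coef0_le {R : numDomainType} n (q : {poly R}) (B r s : R) :
  (size q <= n.+1)%N -> (forall i, `|q`_i.+1| <= B) -> `|s| <= r ->
  `|q.[s] - q`_0| <= B * \sum_(i < n) r ^+ i.+1.
Proof.
move=> sq qB sr; rewrite (horner_coef_wide _ sq) big_ord_recl expr0 mulr1.
rewrite addrC addKr mulr_sumr (le_trans (ler_norm_sum _ _ _)) //.
apply: ler_sum => i _; rewrite lift0 normrM normrX.
apply: ler_pM; rewrite ?exprn_ge0 //.
by apply: lerXn2r; rewrite ?nnegrE ?(le_trans (normr_ge0 s) sr).
Qed.

Lemma small_derivn_coef_bound {R : numDomainType} n (r : R) :
  0 <= r -> exists2 C : R, 0 <= C &
    forall (eps : R) (q : {poly R}), (size q <= n)%N ->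
      (forall k, (k < n)%N -> exists2 s, `|s| <= r & `|q^`(k).[s]| <= eps) ->
      forall i, `|q`_i| <= C * eps.
Proof.
move=> r0; elim: n => [|n [C C0 IH]].
  exists 0 => // eps q; rewrite size_poly_leq0 => /eqP-> _ i.
  by rewrite coef0 normr0 mul0r.
pose S := \sum_(i < n) r ^+ i.+1.
have S0 : 0 <= S by apply: sumr_ge0 => i _; rewrite exprn_ge0.
exists (1 + C + C * S); first by rewrite !addr_ge0 ?mulr_ge0.
move=> eps q sq small.
have [s sr qs] := small 0%N isT; rewrite derivn0 in qs.
have eps0 : 0 <= eps := le_trans (normr_ge0 _) qs.
have coefS i : `|q`_i.+1| <= C * eps.
  rewrite (le_trans (norm_coefS_le_deriv q i)) //; apply: IH.
    exact: size_deriv_le.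
  by move=> k kn; have [t tr qt] := small k.+1 kn; exists t; rewrite // -derivSn.
have tail : `|q.[s] - q`_0| <= C * eps * S by exact: norm_horner_subr_coef0_le.
case=> [|i].
  have q0E : q`_0 = q.[s] - (q.[s] - q`_0) by rewrite subKr.
  rewrite q0E (le_trans (ler_normB _ _)) // !mulrDl mul1r -addrA lerD //.
  by rewrite ler_wpDl ?mulr_ge0 // mulrAC.
rewrite (le_trans (coefS i)) // ler_wpM2r // ler_wpDr ?mulr_ge0 //.
by rewrite ler_wpDl.
Qed.

Lemma large_derivn_or_small_coefs {R : realDomainType} n (r : R) :
  0 <= r -> exists2 C : R, 0 <= C &
    forall (eps : R) (q : {poly R}), (size q <= n.+1)%N ->
      (exists p, (1 <= p <= n)%N /\
         forall s, `|s| <= r -> eps <= `|q^`(p).[s]|)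
      \/ forall i, `|q`_i.+1| <= C * eps.
Proof.
move=> r0; have [C C0 coef_bound] := small_derivn_coef_bound n r r0.
exists C => // eps q sq.
have [|no_large] := pselect (exists p, (1 <= p <= n)%N /\
  forall s, `|s| <= r -> eps <= `|q^`(p).[s]|); first by left.
right=> i; rewrite (le_trans (norm_coefS_le_deriv q i)) //.
apply: coef_bound; first exact: size_deriv_le.
move=> k kn; apply: contrapT => no_small; apply: no_large.
exists k.+1; split=> [|s sr]; first exact: kn.
rewrite derivSn leNgt; apply/negP => small; apply: no_small.
by exists s => //; apply: ltW.
Qed.

Lemma coef_gpoly {R : realType} {d : nat} (a : 'I_d.+1 -> R) (i : 'I_d.+1) :
  (gpoly a)`_i = a i.
Proof. by rewrite coef_poly ltn_ord inord_val. Qed.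

Lemma sum_norm_le_gpoly_coefS {R : realType} {d : nat} (a : 'I_d.+1 -> R) (B : R) :
  (forall i, `|(gpoly a)`_i.+1| <= B) ->
  \sum_(i < d.+1) `|a i| <= `|a ord0| + d%:R * B.
Proof.
move=> coefB; rewrite big_ord_recl lerD2l mulr_natl.
rewrite -[X in B *+ X]card_ord -sumr_const ler_sum // => i _.
by rewrite -coef_gpoly lift0.
Qed.

Lemma sup_norm_g_subr_le {R : realType} {d : nat} (a : 'I_d.+1 -> R) (B r : R) :
  0 <= r -> (forall i, `|(gpoly a)`_i.+1| <= B) ->
  sup [set `|g a s - a ord0| | s in [set s : R | -r <= s <= r]]
    <= B * \sum_(i < d) r ^+ i.+1.
Proof.
move=> r0 coefB; apply: ge_sup.
  by exists `|g a 0 - a ord0|, 0; rewrite //= oppr_le0 r0.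
move=> _ [s sr <-]; rewrite /g -(coef_gpoly a ord0).
by apply: norm_horner_subr_coef0_le; rewrite ?size_poly ?ler_norml.
Qed.

Theorem lemma2 (R : realType) (d : nat) (m Rad : R) :
  0 < m -> 0 < Rad ->
  exists lam : R, 0 < lam /\
    forall a : 'I_d.+1 -> R,
      m <= \sum_(i < d.+1) `|a i| ->
      (exists p : nat, (1 <= p <= d)%N /\
         forall s : R, -Rad <= s <= Rad -> lam <= `|dg p a s|)
      \/
      lam <= `|a ord0| - sup [set `|g a s - a ord0| | s in [set s : R | -Rad <= s <= Rad]].
Proof.
move=> m0 Rad0.
have [C C0 dichotomy] := large_derivn_or_small_coefs d Rad (ltW Rad0).
pose S := \sum_(i < d) Rad ^+ i.+1.
have S0 : 0 <= S by apply: sumr_ge0 => i _; rewrite exprn_ge0 ?ltW.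
have D0 : 0 < 1 + d%:R * C + C * S.
  by rewrite ltr_wpDr ?mulr_ge0 // ltr_wpDr ?mulr_ge0.
pose lam := m / (1 + d%:R * C + C * S).
have lamE : lam + d%:R * (C * lam) + C * lam * S = m.
  by rewrite /lam; field; rewrite lt0r_neq0.
exists lam; split=> [|a sum_ge_m]; first by rewrite divr_gt0.
have [[p [pd large]]|small] := dichotomy lam (gpoly a) (size_poly _ _).
  by left; exists p; split=> // s sI; apply: large; rewrite ler_norml.
right; have := sum_norm_le_gpoly_coefS a _ small.
have := sup_norm_g_subr_le a _ _ (ltW Rad0) small; rewrite -/S.
clearbody lam S; lra.
Qed.
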